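(* Let $n \ge 3$ and let $S \subseteq \{1,\dots,n\}$ with $|S| = 3$. Then there exist $u \in \mathbb{R}^4$, $W \in \mathbb{R}^{4 \times n}$ and $b \in \mathbb{R}^4$ such that the network $f(x) = u^\intercal \sigma(Wx + b)$ satisfies, for every $x \in \{\pm 1\}^n$, $f(x) > 0$ if $\prod_{i \in S} x_i = 1$ and $f(x) < 0$ if $\prod_{i \in S} x_i = -1$.
   Context: Here $\sigma$ is the ReLU function $\sigma(z) = \max(0,z)$, applied componentwise. A 1-layer ReLU net with $p$ hidden neurons is a function $f(x) = u^\intercal \sigma(Wx+b)$ with $u \in \mathbb{R}^p$, $W \in \mathbb{R}^{p\times n}$, $b \in \mathbb{R}^p$; it computes the $(n,3)$-parity with hidden index set $S$ if its output is positive exactly when $\prod_{i\in S} x_i = 1$ and negative otherwise. *)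

From mathcomp Require Import all_boot all_order all_algebra.
From mathcomp Require Import reals.
Set Implicit Arguments. Unset Strict Implicit. Unset Printing Implicit Defensive.
Import Order.TTheory GRing.Theory Num.Theory.
Local Open Scope ring_scope.

Definition relu (R : realType) (z : R) : R := Num.max 0 z.
Definition relu_vec (R : realType) (p : nat) (v : 'cV[R]_p) : 'cV[R]_p :=
  \col_i relu (v i 0).

Definition relu_net (R : realType) (p n : nat) (u : 'cV[R]_p) (W : 'M[R]_(p, n))
  (b : 'cV[R]_p) (x : 'cV[R]_n) : R :=
  (u^T *m relu_vec (W *m x + b)) 0 0.

Definition is_pm1 (R : realType) (n : nat) (x : 'cV[R]_n) : Prop :=
  forall i, x i 0 = 1 \/ x i 0 = -1.

Definition parity (R : realType) (n : nat) (S : {set 'I_n}) (x : 'cV[R]_n) : R :=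
  \prod_(i in S) x i 0.

(* Let every hidden neuron read the same linear form s = x_a + x_b + x_c,
   where S = {a, b, c}.  On {+-1}^n, s ranges over {-3, -1, 1, 3} and the
   parity x_a x_b x_c is -1, 1, -1, 1 there, respectively.  Four ReLUs with
   kinks at s = -4, -2, 0, 2 build a zigzag through exactly these values, so
   the network computes the parity itself. *)

From mathcomp Require Import all_boot all_order all_algebra.
From mathcomp Require Import reals lra.
Set Implicit Arguments. Unset Strict Implicit. Unset Printing Implicit Defensive.
Import Order.TTheory GRing.Theory Num.Theory.
Local Open Scope ring_scope.

Lemma cards3P (T : finType) (A : {set T}) :
  #|A| = 3%N ->
  exists a b c, [/\ a \notin [set b; c], b != c & A = [set a; b; c]].
Proof.
move=> A3; have /set0Pn [a aA] : A != set0 by rewrite -cards_eq0 A3.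
have /eqP/cards2P [b [c [bc Aa]]] : #|A :\ a| = 2%N.
  by move: A3; rewrite (cardsD1 a) aA => -[].
exists a, b, c; split=> //; first by rewrite -Aa setD11.
by rewrite -(setD1K aA) Aa setUA.
Qed.

Lemma big_set3 (R : Type) (idx : R) (op : Monoid.com_law idx) (T : finType)
    (a b c : T) (F : T -> R) :
  a \notin [set b; c] -> b != c ->
  \big[op/idx]_(i in [set a; b; c]) F i = op (F a) (op (F b) (F c)).
Proof. by move=> aNbc bc; rewrite -setUA !big_setU1 ?in_set1 //= big_set1. Qed.

Lemma mul_row_indicator (R : realType) n (S : {set 'I_n}) (x : 'cV[R]_n) :
  ((\row_j (j \in S)%:R) *m x) 0 0 = \sum_(j in S) x j 0.
Proof.
rewrite mxE [RHS]big_mkcond /=; apply: eq_bigr => j _.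
by rewrite mxE; case: (j \in S); rewrite ?mul1r ?mul0r.
Qed.

Lemma relu_net_const_rows (R : realType) p n (u b : 'cV[R]_p) (w : 'rV[R]_n) x :
  relu_net u (\matrix_(k < p) w) b x = \sum_k u k 0 * relu ((w *m x) 0 0 + b k 0).
Proof.
rewrite /relu_net /relu_vec !mxE; apply: eq_bigr => k _.
rewrite !mxE; congr (_ * relu (_ + _)).
by apply: eq_bigr => j _; rewrite mxE.
Qed.

Section Sawtooth.
Variable R : realType.

Definition sawtooth (s : R) : R :=
  - relu (s + 4) + 4 * relu (s + 2) - 8 * relu s + 12 * relu (s - 2).

Definition sawtooth_out : 'cV[R]_4 := \col_k [:: -1; 4; -8; 12]`_k.
Definition sawtooth_bias : 'cV[R]_4 := \col_k [:: 4; 2; 0; -2]`_k.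

Lemma sawtooth_sum (s : R) :
  \sum_k sawtooth_out k 0 * relu (s + sawtooth_bias k 0) = sawtooth s.
Proof.
by rewrite /sawtooth !big_ord_recr big_ord0 /= !mxE /= add0r addr0 mulN1r mulNr.
Qed.

Lemma sawtooth_pm1 (a b c : R) :
  a = 1 \/ a = -1 -> b = 1 \/ b = -1 -> c = 1 \/ c = -1 ->
  sawtooth (a + b + c) = a * b * c.
Proof.
by move=> [] -> [] -> [] ->; rewrite /sawtooth /relu; do 4 case: leP => ?; lra.
Qed.

Lemma sawtooth_net_parity n (a b c : 'I_n) (x : 'cV[R]_n) :
  a \notin [set b; c] -> b != c -> is_pm1 x ->
  relu_net sawtooth_out (\matrix_(k < 4) \row_j (j \in [set a; b; c])%:R)
    sawtooth_bias x = parity [set a; b; c] x.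
Proof.
move=> aNbc bc xpm1.
rewrite relu_net_const_rows mul_row_indicator sawtooth_sum /parity.
by rewrite !big_set3 //= addrA mulrA sawtooth_pm1.
Qed.

End Sawtooth.

Theorem proposition3 (R : realType) (n : nat) (S : {set 'I_n}) :
  (3 <= n)%N -> #|S| = 3%N ->
  exists (u : 'cV[R]_4) (W : 'M[R]_(4, n)) (b : 'cV[R]_4),
    forall x : 'cV[R]_n, is_pm1 x ->
      (parity S x = 1 -> 0 < relu_net u W b x) /\
      (parity S x = -1 -> relu_net u W b x < 0).
Proof.
(* [3 <= n] is implied by [#|S| = 3]. *)
move=> _ /cards3P [a [b [c [aNbc bc ->]]]].
exists (sawtooth_out R), (\matrix_(k < 4) \row_j (j \in [set a; b; c])%:R).
exists (sawtooth_bias R) => x /(sawtooth_net_parity aNbc bc) ->.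
by split=> ->; rewrite ?oppr_lt0 ltr01.
Qed.
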